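(* Let $n\ge 3$, let $a_0,\ldots,a_{n-1}$ be indeterminates over $\mathbb{Q}$, and let $f=x^n+a_{n-1}x^{n-1}+\cdots+a_0$ with roots $r_1,\ldots,r_n$ in an algebraic closure of $\mathbb{Q}(a_0,\ldots,a_{n-1})$. Let $D_2\in\mathbb{Q}[a_0,\ldots,a_{n-1}]$ be the polynomial obtained by expressing the symmetric polynomial $\prod_{1\le i,j,k\le n,\ i<j,\ j\ne k,\ k\ne i}(2r_k-r_i-r_j)$ in terms of the coefficients via Vieta's formulas $a_{n-i}=(-1)^i s_i$ ($s_i$ the $i$th elementary symmetric polynomial of $r_1,\ldots,r_n$). Then $D_2$ is irreducible over $\mathbb{Q}$. *)

From mathcomp Require Import all_boot all_algebra.
From mathcomp Require Import mpoly.
Set Implicit Arguments. Unset Strict Implicit. Unset Printing Implicit Defensive.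
Import GRing.Theory.
Local Open Scope ring_scope.

(* Irreducibility of a multivariate polynomial over a field: it is
   non-constant (msize p = 1 + total degree, and msize 0 = 0), and in any
   factorization one of the factors is constant (the units of F[x_1..x_n]
   are exactly the nonzero constants). *)
Definition mpoly_irreducible (n : nat) (F : fieldType) (p : {mpoly F[n]}) : Prop :=
  (1 < msize p)%N /\
  forall q r : {mpoly F[n]}, p = q * r -> (msize q <= 1)%N \/ (msize r <= 1)%N.

(* The generic roots r_1..r_n are the variables 'X_0 .. 'X_(n-1).
   rootprod n = prod_{i<j, k<>i, k<>j} (2 r_k - r_i - r_j). *)
Definition rootprod (n : nat) : {mpoly rat[n]} :=
  \prod_(i : 'I_n) \prod_(j : 'I_n | (i < j)%N)
     \prod_(k : 'I_n | (k != i) && (k != j))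
        ('X_k *+ 2 - 'X_i - 'X_j).

(* Vieta substitution: the coefficient variable a_j (j = 0..n-1) is sent
   to (-1)^(n-j) s_(n-j)(r_1..r_n), i.e. a_(n-i) = (-1)^i s_i. *)
Definition vieta (n : nat) : n.-tuple {mpoly rat[n]} :=
  [tuple ((-1) ^+ (n - j)) *: mesym n rat (n - j) | j < n].

(** Let P be the product of the linear forms L_ijk = 2 X_k - X_i - X_j.
    P is symmetric, so it is the Vieta image of a unique D2 (fundamental
    theorem of symmetric polynomials), and a factorization D2 = q r becomes a
    factorization P = Q R into symmetric polynomials.  The substitution
    X_i := 2 X_k - X_j kills L_ijk and no other factor, so L_ijk divides a
    polynomial exactly when this substitution kills it, and distinct factors
    are coprime.  Some factor divides Q, say; since Q is symmetric and S_n is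
    3-transitive, every factor divides Q, hence P divides Q and R is
    constant.  The Vieta substitution is injective and fixes constants, so
    the corresponding factor of D2 is constant as well. *)

From mathcomp Require Import all_boot all_algebra.
From mathcomp Require Import fingroup perm action primitive_action alt.
From mathcomp Require Import mpoly.
From mathcomp Require Import ring.
Set Implicit Arguments. Unset Strict Implicit. Unset Printing Implicit Defensive.
Import GRing.Theory.
Local Open Scope ring_scope.

Definition dvdr (R : comPzRingType) (d a : R) : Prop := exists c, a = d * c.

Lemma dvdr_mul_unit (R : idomainType) (a b : R) :
  a * b != 0 -> dvdr (a * b) a -> b \is a GRing.unit.
Proof.
move=> ab_neq0 [c a_eq]; apply/unitrPr; exists c.
have a_neq0 : a != 0 by apply: contraNneq ab_neq0 => ->; rewrite mul0r.
by apply: (mulfI a_neq0); rewrite mulr1 mulrA -a_eq.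
Qed.

Lemma msize_unit (R : idomainType) n (p : {mpoly R[n]}) :
  p \is a GRing.unit -> (msize p <= 1)%N.
Proof. by case/andP => /eqP -> _; rewrite msizeC; case: (_ != 0). Qed.

Section Composition.
Variable R : comNzRingType.

Lemma comp_mpolyA n k l (p : {mpoly R[n]}) (t : n.-tuple {mpoly R[k]})
    (u : k.-tuple {mpoly R[l]}) :
  (p \mPo t) \mPo u = p \mPo [tuple tnth t i \mPo u | i < n].
Proof.
rewrite [p \mPo t]comp_mpolyE [RHS]comp_mpolyE raddf_sum /=.
apply: eq_bigr => m _.
rewrite linearZ /= rmorph_prod; congr (_ *: _); apply: eq_bigr => i _.
by rewrite rmorphXn tnth_mktuple.
Qed.

Lemma comp_mpolyXU_tnth n k (i : 'I_n) (t : n.-tuple {mpoly R[k]}) :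
  'X_i \mPo t = tnth t i.
Proof. by rewrite comp_mpolyXU -tnth_nth. Qed.

Variable n : nat.
Implicit Types (d F : {mpoly R[n]}) (u : n.-tuple {mpoly R[n]}).

Lemma dvdr_sub_comp_mpoly d u F :
  (forall l, dvdr d ('X_l - tnth u l)) -> dvdr d (F - (F \mPo u)).
Proof.
move=> dvd_u; pose P G := dvdr d (G - (G \mPo u)).
have P_C c : P c%:MP by exists 0; rewrite /P comp_mpolyC subrr mulr0.
have P_D G H : P G -> P H -> P (G + H).
  rewrite /P => -[x Gx] [y Hy]; exists (x + y).
  by rewrite rmorphD mulrDr -Gx -Hy; ring.
have P_M G H : P G -> P H -> P (G * H).
  rewrite /P => -[x Gx] [y Hy]; exists (x * H + (G \mPo u) * y).
  by rewrite rmorphM /= mulrDr mulrA -Gx mulrCA -Hy; ring.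
rewrite [F]mpolyE; apply: (big_ind P); [by rewrite -mpolyC0 | exact: P_D |].
move=> m _; rewrite -mul_mpolyC mpolyXE_id; apply: (P_M) => //.
apply: (big_ind P); [by rewrite -mpolyC1 | exact: P_M | move=> l _].
elim: (m l) => [|e IHe]; first by rewrite expr0 -mpolyC1.
by rewrite exprS; apply: P_M => //; rewrite /P comp_mpolyXU_tnth.
Qed.

Definition subst_var (i : 'I_n) (e : {mpoly R[n]}) : n.-tuple {mpoly R[n]} :=
  [tuple if l == i then e else 'X_l | l < n].

Lemma comp_subst_var_eq0 i e F :
  F \mPo subst_var i e = 0 -> dvdr ('X_i - e) F.
Proof.
move=> F_eq0; have := @dvdr_sub_comp_mpoly ('X_i - e) (subst_var i e) F.
rewrite F_eq0 subr0; apply=> l; rewrite tnth_mktuple.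
case: eqP => [->|_]; first by exists 1; rewrite mulr1.
by exists 0; rewrite subrr mulr0.
Qed.

Definition signed_rev (c : 'I_n -> R) : n.-tuple {mpoly R[n]} :=
  [tuple c j *: 'X_(rev_ord j) | j < n].

Lemma signed_revK c c' F : (forall j, c j * c' (rev_ord j) = 1) ->
  (F \mPo signed_rev c) \mPo signed_rev c' = F.
Proof.
move=> cc'; rewrite comp_mpolyA -[RHS]comp_mpoly_id; congr (F \mPo _).
apply: eq_from_tnth => j; rewrite !tnth_mktuple comp_mpolyZ comp_mpolyXU_tnth.
by rewrite tnth_mktuple rev_ordK scalerA cc' scale1r.
Qed.

End Composition.

Lemma exists_perm3 n (a b c i j k : 'I_n) :
  uniq [:: a; b; c] -> uniq [:: i; j; k] ->
  exists s : 'S_n, [/\ s a = i, s b = j & s c = k].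
Proof.
move=> abc ijk.
have dtuple3 (x y z : 'I_n) :
    uniq [:: x; y; z] -> [tuple x; y; z] \in 3.-dtuple(setT).
  by move=> xyz; rewrite inE xyz; apply/subsetP => ? _; rewrite inE.
have tr3 : [transitive^3 'Sym_('I_n), on setT | 'P].
  apply: ntransitive_weak (Sym_trans _).
  by have := max_card (mem [:: a; b; c]); rewrite (card_uniqP abc).
have [s _ /(congr1 val) [-> -> ->]] :=
  atransP2 tr3 (dtuple3 _ _ _ abc) (dtuple3 _ _ _ ijk).
by exists s.
Qed.

Section RootProduct.
Variable n : nat.
Implicit Types (i j k : 'I_n) (F Q : {mpoly rat[n]}).

Definition lform i j k : {mpoly rat[n]} := 'X_k *+ 2 - 'X_i - 'X_j.

Definition lform_subst i j k := subst_var i ('X_k *+ 2 - 'X_j : {mpoly rat[n]}).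

Lemma lform_substK i j k :
  k != i -> j != i -> lform i j k \mPo lform_subst i j k = 0.
Proof.
move=> ki ji; rewrite /lform !rmorphB rmorphMn /= !comp_mpolyXU_tnth.
by rewrite !tnth_mktuple eqxx (negbTE ki) (negbTE ji); ring.
Qed.

Lemma dvdr_lformP i j k F : k != i -> j != i ->
  dvdr (lform i j k) F <-> F \mPo lform_subst i j k = 0.
Proof.
move=> ki ji; split=> [[A ->]|/comp_subst_var_eq0 [A ->]].
  by rewrite rmorphM /= lform_substK // mul0r.
by exists (- A); rewrite /lform; ring.
Qed.

Lemma meval_lform_subst (v : 'I_n -> rat) i j k i' j' k' :
  meval v (lform i' j' k' \mPo lform_subst i j k) =
  let w l := if l == i then v k *+ 2 - v j else v l in w k' *+ 2 - w i' - w j'.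
Proof.
rewrite comp_mpoly_meval /lform !mevalB mevalMn !mevalXU /= !tnth_mktuple.
by rewrite !(fun_if (meval v)) !mevalB mevalMn !mevalXU.
Qed.

Definition triple := ('I_n * ('I_n * 'I_n))%type.
Implicit Types t : triple.

Definition admissible t :=
  let: (i, (j, k)) := t in [&& (i < j)%N, k != i & k != j].
Definition tform t := let: (i, (j, k)) := t in lform i j k.
Definition tsubst t := let: (i, (j, k)) := t in lform_subst i j k.

Lemma dvdr_tformP t F :
  admissible t -> dvdr (tform t) F <-> F \mPo tsubst t = 0.
Proof.
case: t => i [j k] /and3P[ij ki _]; apply: dvdr_lformP => //.
by rewrite eq_sym neq_ltn ij.
Qed.

Lemma tform_neq0 t : admissible t -> tform t != 0.
Proof.
case: t => i [j k] /and3P[_ ki kj].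
apply/eqP => /(congr1 (meval (fun m => (m == k)%:R))).
rewrite /lform meval0 !mevalB mevalMn !mevalXU eqxx (eq_sym i) (eq_sym j).
by rewrite (negbTE ki) (negbTE kj) => /eqP.
Qed.

Lemma tform_tsubst_neq0 t t' :
  admissible t -> admissible t' -> t != t' -> tform t' \mPo tsubst t != 0.
Proof.
case: t => i [j k]; case: t' => i' [j' k'] /=.
move=> /and3P[ij ki kj] /and3P[ij' ki' kj'] tt'.
(* Evaluate at a coordinate vector e_l, with l chosen according to where
   i occurs in (i', j', k'). *)
suff [l] : exists l,
    meval (fun m => (m == l)%:R) (lform i' j' k' \mPo lform_subst i j k) != 0.
  by apply: contraNneq => ->; rewrite meval0.
have nij : i != j by rewrite neq_ltn ij.
have ni'j' : i' != j' by rewrite neq_ltn ij'.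
have [eii'|nii'] := eqVneq i i'.
  subst i'; have [ejj'|njj'] := eqVneq j j'.
    subst j'; have nkk' : k != k' by apply: contraNneq tt' => ->.
    exists k'; rewrite meval_lform_subst /= !eqxx (negbTE ki') (negbTE nkk').
    by rewrite (eq_sym j) (negbTE kj') (eq_sym j) (negbTE nij).
  exists j; rewrite meval_lform_subst /= !eqxx (negbTE ki').
  rewrite (eq_sym j') (negbTE ni'j') (negbTE kj) (eq_sym j') (negbTE njj').
  by case: (k' == j).
have [eij'|nij'] := eqVneq i j'.
  subst j'; exists j; rewrite meval_lform_subst /= !eqxx.
  have ni'j : i' != j by rewrite neq_ltn (ltn_trans ij' ij).
  rewrite (negbTE kj') (eq_sym i') (negbTE nii') (negbTE kj) (negbTE ni'j).
  by case: (k' == j).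
have [eik'|nik'] := eqVneq i k'.
  subst k'; exists k; rewrite meval_lform_subst /= !eqxx (eq_sym j) (negbTE kj).
  rewrite (eq_sym i') (negbTE ki') (eq_sym j') (negbTE kj').
  by case: (i' == k); case: (j' == k).
exists k'; rewrite meval_lform_subst /= !eqxx (eq_sym k') (negbTE nik').
rewrite (eq_sym i') (negbTE nii') (eq_sym j') (negbTE nij').
by rewrite (eq_sym i') (negbTE ki') (eq_sym j') (negbTE kj').
Qed.

Lemma rootprodE : rootprod n = \prod_(t | admissible t) tform t.
Proof.
rewrite /rootprod (eq_bigr _ (fun i _ => pair_big_dep _ _ _)) pair_big_dep /=.
by apply: eq_big => [[i [j k]]|[i [j k]]].
Qed.

Lemma rootprod_tsubst t : admissible t -> rootprod n \mPo tsubst t = 0.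
Proof.
move=> adm_t; rewrite rootprodE rmorph_prod (bigD1 t) //=.
case: t adm_t => i [j k] /and3P[ij ki _].
by rewrite lform_substK ?mul0r // eq_sym neq_ltn ij.
Qed.

Lemma rootprod_neq0 : rootprod n != 0.
Proof. by rewrite rootprodE; apply/prodf_neq0 => t /tform_neq0. Qed.

Lemma dvdr_prod_tform (s : seq triple) F : uniq s -> all admissible s ->
  (forall t, t \in s -> dvdr (tform t) F) -> dvdr (\prod_(t <- s) tform t) F.
Proof.
elim: s F => [|t s IHs] F /=; first by exists F; rewrite big_nil mul1r.
move=> /andP[t_notin_s uniq_s] /andP[adm_t adm_s] dvdF.
have [A FA] := dvdF t (mem_head t s).
have dvdA t' : t' \in s -> dvdr (tform t') A.
  move=> t'_in_s; have adm_t' : admissible t' by move/allP: adm_s; apply.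
  have tt' : t' != t by apply: contraNneq t_notin_s => <-.
  have := dvdF t'; rewrite in_cons t'_in_s orbT => /(_ isT).
  move/(dvdr_tformP _ adm_t'); rewrite FA rmorphM /= => /eqP.
  rewrite mulf_eq0 (negbTE (tform_tsubst_neq0 adm_t' adm_t tt')).
  by move/eqP/(dvdr_tformP _ adm_t').
have [B AB] := IHs A uniq_s adm_s dvdA.
by exists B; rewrite FA AB big_cons mulrA.
Qed.

Lemma dvdr_rootprod F :
  (forall t, admissible t -> dvdr (tform t) F) -> dvdr (rootprod n) F.
Proof.
move=> dvdF; rewrite rootprodE -big_filter; apply: dvdr_prod_tform.
- exact/filter_uniq/index_enum_uniq.
- exact: filter_all.
- by move=> t; rewrite mem_filter => /andP[/dvdF].
Qed.

Lemma msymXU (s : 'S_n) i : msym s ('X_i : {mpoly rat[n]}) = 'X_(s i).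
Proof.
rewrite msymX; congr mpolyX; apply/mnmP => l; rewrite !mnmE.
by rewrite -(inj_eq (@perm_inj _ s)) permKV.
Qed.

Lemma msym_lform (s : 'S_n) i j k :
  msym s (lform i j k) = lform (s i) (s j) (s k).
Proof. by rewrite /lform !msymB msymMn !msymXU. Qed.

Definition perm_triple (s : 'S_n) t : triple :=
  let: (i, (j, k)) := t in
  if (s i < s j)%N then (s i, (s j, s k)) else (s j, (s i, s k)).

Lemma msym_tform (s : 'S_n) t : msym s (tform t) = tform (perm_triple s t).
Proof.
case: t => i [j k]; rewrite /= msym_lform; case: ifP => //= _.
by rewrite /lform addrAC.
Qed.

Lemma admissible_perm_triple (s : 'S_n) t :
  admissible t -> admissible (perm_triple s t).
Proof.
case: t => i [j k] /and3P[ij ki kj] /=.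
case: ltngtP => [sij|sji|/val_inj/perm_inj eij] /=.
- by rewrite sij !(inj_eq perm_inj) ki kj.
- by rewrite sji !(inj_eq perm_inj) ki kj.
- by rewrite eij ltnn in ij.
Qed.

Lemma perm_tripleK (s : 'S_n) t :
  admissible t -> perm_triple s^-1 (perm_triple s t) = t.
Proof.
case: t => i [j k] /and3P[ij _ _] /=.
case: ltngtP => [_|_|/val_inj/perm_inj eij] /=; rewrite !permK.
- by rewrite ij.
- by rewrite ltnNge (ltnW ij).
- by rewrite eij ltnn in ij.
Qed.

Lemma rootprod_sym : rootprod n \is symmetric.
Proof.
apply/issymP => s; rewrite rootprodE rmorph_prod /=.
rewrite [RHS](reindex_onto (perm_triple s) (perm_triple s^-1)) /=; last first.
  by move=> t /(perm_tripleK s^-1); rewrite invgK.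
apply: eq_big => [t|t adm_t]; last exact: msym_tform.
apply/idP/andP => [adm_t|[adm_st /eqP <-]]; last exact: admissible_perm_triple.
by rewrite admissible_perm_triple ?perm_tripleK.
Qed.

Lemma admissible_uniq i j k : admissible (i, (j, k)) -> uniq [:: i; j; k].
Proof.
move=> /and3P[ij ki kj]; rewrite /= !inE negb_or neq_ltn ij.
by rewrite ![_ == k]eq_sym ki kj.
Qed.

Lemma exists_admissible : (3 <= n)%N -> exists t, admissible t.
Proof.
move=> n_ge3; have lt_n m : (m < 3)%N -> (m < n)%N by move/leq_trans; apply.
by exists (Ordinal (lt_n 0%N isT),
          (Ordinal (lt_n 1%N isT), Ordinal (lt_n 2%N isT))).
Qed.

Lemma dvdr_tform_sym Q t0 t : Q \is symmetric ->
  admissible t0 -> admissible t -> dvdr (tform t0) Q -> dvdr (tform t) Q.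
Proof.
case: t0 t => a [b c] [i [j k]] /issymP symQ.
move=> /admissible_uniq abc /admissible_uniq ijk.
have [s [<- <- <-]] := exists_perm3 abc ijk.
by case=> A QA; exists (msym s A); rewrite -(symQ s) QA msymM msym_lform.
Qed.

Lemma rootprod_cofactor_msize Q R t : Q \is symmetric -> admissible t ->
  dvdr (tform t) Q -> Q * R = rootprod n -> (msize R <= 1)%N.
Proof.
move=> symQ adm_t dvdQ QR; apply/msize_unit/(@dvdr_mul_unit _ Q).
  by rewrite QR rootprod_neq0.
rewrite QR; apply: dvdr_rootprod => t' adm_t'.
exact: (dvdr_tform_sym symQ adm_t adm_t' dvdQ).
Qed.

Lemma rootprod_sym_factor Q R : (3 <= n)%N ->
  Q \is symmetric -> R \is symmetric -> Q * R = rootprod n ->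
  (msize Q <= 1)%N \/ (msize R <= 1)%N.
Proof.
move=> n_ge3 symQ symR QR; have [t adm_t] := exists_admissible n_ge3.
have := rootprod_tsubst adm_t; rewrite -QR rmorphM /= => /eqP; rewrite mulf_eq0.
case/orP => /eqP/(dvdr_tformP _ adm_t) dvdt.
  by right; apply: rootprod_cofactor_msize symQ adm_t dvdt QR.
by left; apply: rootprod_cofactor_msize symR adm_t dvdt _; rewrite mulrC.
Qed.

Lemma msize_rootprod_gt1 : (3 <= n)%N -> (1 < msize (rootprod n))%N.
Proof.
move=> n_ge3; have [t adm_t] := exists_admissible n_ge3.
rewrite ltnNge; apply: contra (rootprod_neq0) => /msize1_polyC P_C.
by have := rootprod_tsubst adm_t; rewrite P_C comp_mpolyC => ->.
Qed.

End RootProduct.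

Section Vieta.
Variable n : nat.
Implicit Types p q : {mpoly rat[n]}.

Definition vieta_sign (j : 'I_n) : rat := (-1) ^+ (n - j).

Lemma vieta_signK j : vieta_sign j * vieta_sign j = 1.
Proof. by rewrite -exprMn mulrNN mulr1 expr1n. Qed.

Lemma comp_vietaE p : p \mPo vieta n =
  (p \mPo signed_rev vieta_sign) \mPo [tuple mesym n rat i.+1 | i < n].
Proof.
rewrite comp_mpolyA; congr (p \mPo _); apply: eq_from_tnth => j.
by rewrite !tnth_mktuple comp_mpolyZ comp_mpolyXU_tnth tnth_mktuple /= subnSK.
Qed.

Lemma comp_vieta_inj : injective (fun p => p \mPo vieta n).
Proof.
move=> p q /=; rewrite !comp_vietaE => /msym_fundamental_un pq.
have K : cancel (comp_mpoly (signed_rev vieta_sign))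
                (comp_mpoly (signed_rev (vieta_sign \o @rev_ord n))).
  by move=> r; apply: signed_revK => j; rewrite /= rev_ordK vieta_signK.
exact: (can_inj K pq).
Qed.

Lemma comp_vieta_sym p : p \mPo vieta n \is symmetric.
Proof.
apply: mcomp_sym => i; rewrite -tnth_nth tnth_mktuple.
exact/rpredZ/mesym_sym.
Qed.

Lemma comp_vieta_surj q : q \is symmetric -> exists p, p \mPo vieta n = q.
Proof.
case/sym_fundamental => r [rq _].
exists (r \mPo signed_rev (vieta_sign \o @rev_ord n)).
by rewrite comp_vietaE signed_revK // => j; apply: vieta_signK.
Qed.

Lemma msize_comp_vieta_le1 p :
  (msize (p \mPo vieta n) <= 1)%N = (msize p <= 1)%N.
Proof.
apply/idP/idP => /msize1_polyC pC; last by rewrite pC comp_mpolyC msizeC leq_b1.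
suff -> : p = ((p \mPo vieta n)@_0)%:MP by rewrite msizeC leq_b1.
by apply: comp_vieta_inj; rewrite /= comp_mpolyC.
Qed.

End Vieta.

Theorem proposition2 (n : nat) (hn : (3 <= n)%N) :
  (exists D2 : {mpoly rat[n]}, D2 \mPo vieta n = rootprod n) /\
  (forall D2 : {mpoly rat[n]}, D2 \mPo vieta n = rootprod n ->
     mpoly_irreducible D2).
Proof.
split; first exact/comp_vieta_surj/rootprod_sym.
move=> D DP; split.
  by rewrite ltnNge -msize_comp_vieta_le1 DP -ltnNge msize_rootprod_gt1.
move=> q r Dqr.
have := rootprod_sym_factor hn (comp_vieta_sym q) (comp_vieta_sym r).
by rewrite -rmorphM /= -Dqr DP !msize_comp_vieta_le1; apply.
Qed.
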